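(* Let $A$ be a sequence algebra and $P$ a homogeneous normed $A$-module of finite type such that for every $n\in\mathbb N$ the coordinate subspace $P_n$ is isometrically isomorphic to $l_1^0(\Lambda_n)$ for some index set $\Lambda_n$. Then $P$ is extremely projective with respect to $\mathcal H$.
   Context: All normed algebras and modules are contractive ($\|ab\|\le\|a\|\|b\|$, $\|a\cdot x\|\le\|a\|\|x\|$), not necessarily complete; morphisms are bounded $A$-module maps. A morphism $\tau:Y\to X$ is coisometric if $\|\tau\|\le1$ and for every $x\in X$, $\varepsilon>0$ there is $y$ with $\tau(y)=x$, $\|y\|<\|x\|+\varepsilon$. $P$ is extremely projective with respect to a full subcategory $\mathcal K$ if for every coisometric morphism $\tau:Y\to X$ with $X,Y\in\mathcal K$, every bounded morphism $\varphi:P\to X$ and $\varepsilon>0$ there is a morphism $\psi:P\to Y$ with $\tau\psi=\varphi$ and $\|\psi\|<\|\varphi\|+\varepsilon$. $l_1^0(\Lambda)$: finitely supported functions on $\Lambda$ with the $l_1$-norm. A sequence algebra is a normed algebra of complex sequences with coordinatewise operations containing $c_{00}$ as a dense subalgebra, with $\|\mathbf p^n\|=1$, where $\mathbf p^n$ has $1$ in place $n$ and $0$ elsewhere. $x_n:=\mathbf p^n\cdot x$, $X_n:=\{\mathbf p^n\cdot x\}$. Essential: closed span of $\{a\cdot x\}$ is $X$. Homogeneous: $\|x_n\|\le\|y_n\|$ for all $n$ implies $\|x\|\le\|y\|$. Finite type: for each $x$, $x_n=0$ for large $n$. $\mathcal H$ is the full subcategory of essential homogeneous normed $A$-modules. 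*)

From Stdlib Require Import Reals List.
Open Scope R_scope.

Record C := mkC { re : R; im : R }.
Definition C0 : C := mkC 0 0.
Definition C1 : C := mkC 1 0.
Definition Cadd (a b : C) : C := mkC (re a + re b) (im a + im b).
Definition Copp (a : C) : C := mkC (- re a) (- im a).
Definition Cmul (a b : C) : C :=
  mkC (re a * re b - im a * im b) (re a * im b + im a * re b).
Definition Cmod (a : C) : R := sqrt (re a * re a + im a * im a).

Definition cseq := nat -> C.
Definition sadd (a b : cseq) : cseq := fun k => Cadd (a k) (b k).
Definition sopp (a : cseq) : cseq := fun k => Copp (a k).
Definition smul (a b : cseq) : cseq := fun k => Cmul (a k) (b k).
Definition sscal (c : C) (a : cseq) : cseq := fun k => Cmul c (a k).
Definition in_c00 (a : cseq) : Prop := exists N, forall k, (N <= k)%nat -> a k = C0.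
Definition pvec (n : nat) : cseq := fun k => if Nat.eqb k n then C1 else C0.

Record SeqAlg := {
  inA : cseq -> Prop;
  nA : cseq -> R;
  inA_add : forall a b, inA a -> inA b -> inA (sadd a b);
  inA_scal : forall c a, inA a -> inA (sscal c a);
  inA_mul : forall a b, inA a -> inA b -> inA (smul a b);
  inA_c00 : forall a, in_c00 a -> inA a;
  nA_nonneg : forall a, inA a -> 0 <= nA a;
  nA_zero : forall a, inA a -> nA a = 0 -> a = (fun _ => C0);
  nA_triangle : forall a b, inA a -> inA b -> nA (sadd a b) <= nA a + nA b;
  nA_scal : forall c a, inA a -> nA (sscal c a) = Cmod c * nA a;
  nA_submult : forall a b, inA a -> inA b -> nA (smul a b) <= nA a * nA b;
  c00_dense : forall a eps, inA a -> 0 < eps ->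
      exists b, in_c00 b /\ nA (sadd a (sopp b)) < eps;
  nA_pvec : forall n, nA (pvec n) = 1
}.

Record NMod (A : SeqAlg) := {
  car :> Type;
  mzero : car;
  madd : car -> car -> car;
  mopp : car -> car;
  mscal : C -> car -> car;
  mnorm : car -> R;
  act : cseq -> car -> car;
  madd_assoc : forall x y z, madd x (madd y z) = madd (madd x y) z;
  madd_comm : forall x y, madd x y = madd y x;
  madd_0 : forall x, madd mzero x = x;
  madd_opp : forall x, madd x (mopp x) = mzero;
  mscal_1 : forall x, mscal C1 x = x;
  mscal_mul : forall a b x, mscal a (mscal b x) = mscal (Cmul a b) x;
  mscal_addl : forall a b x, mscal (Cadd a b) x = madd (mscal a x) (mscal b x);
  mscal_addr : forall a x y, mscal a (madd x y) = madd (mscal a x) (mscal a y);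
  mnorm_nonneg : forall x, 0 <= mnorm x;
  mnorm_zero : forall x, mnorm x = 0 -> x = mzero;
  mnorm_triangle : forall x y, mnorm (madd x y) <= mnorm x + mnorm y;
  mnorm_scal : forall c x, mnorm (mscal c x) = Cmod c * mnorm x;
  act_addr : forall a x y, inA A a -> act a (madd x y) = madd (act a x) (act a y);
  act_scalr : forall a c x, inA A a -> act a (mscal c x) = mscal c (act a x);
  act_addl : forall a b x, inA A a -> inA A b -> act (sadd a b) x = madd (act a x) (act b x);
  act_scall : forall a c x, inA A a -> act (sscal c a) x = mscal c (act a x);
  act_mul : forall a b x, inA A a -> inA A b -> act (smul a b) x = act a (act b x);
  act_contr : forall a x, inA A a -> mnorm (act a x) <= nA A a * mnorm x
}.

Arguments mzero {A X} : rename.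
Arguments madd {A X} : rename.
Arguments mopp {A X} : rename.
Arguments mscal {A X} : rename.
Arguments mnorm {A X} : rename.
Arguments act {A X} : rename.

Definition is_morph {A : SeqAlg} {X Y : NMod A} (f : X -> Y) : Prop :=
  (forall x y, f (madd x y) = madd (f x) (f y)) /\
  (forall c x, f (mscal c x) = mscal c (f x)) /\
  (forall a x, inA A a -> f (act a x) = act a (f x)) /\
  (exists M, forall x, mnorm (f x) <= M * mnorm x).

Definition opnorm {A : SeqAlg} {X Y : NMod A} (f : X -> Y) (r : R) : Prop :=
  is_lub (fun t => exists x, mnorm x <= 1 /\ t = mnorm (f x)) r.

Definition coisometric {A : SeqAlg} {X Y : NMod A} (tau : Y -> X) : Prop :=
  is_morph tau /\
  (exists r, opnorm tau r /\ r <= 1) /\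
  (forall x eps, 0 < eps -> exists y, tau y = x /\ mnorm y < mnorm x + eps).

Definition extremely_projective {A : SeqAlg} (K : NMod A -> Prop) (P : NMod A) : Prop :=
  forall (X Y : NMod A), K X -> K Y ->
  forall tau : Y -> X, coisometric tau ->
  forall phi : P -> X, is_morph phi ->
  forall eps, 0 < eps ->
  exists psi : P -> Y, is_morph psi /\ (forall x, tau (psi x) = phi x) /\
    (forall r, opnorm phi r -> exists r', opnorm psi r' /\ r' < r + eps).

Inductive in_span {A : SeqAlg} {X : NMod A} (S : X -> Prop) : X -> Prop :=
| span_0 : in_span S mzero
| span_S : forall x, S x -> in_span S x
| span_add : forall x y, in_span S x -> in_span S y -> in_span S (madd x y)
| span_scal : forall c x, in_span S x -> in_span S (mscal c x).

Definition essential {A : SeqAlg} (X : NMod A) : Prop :=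
  forall (x : X) eps, 0 < eps ->
  exists y, in_span (fun z : X => exists a w, inA A a /\ z = act a w) y /\
            mnorm (madd x (mopp y)) < eps.

Definition homogeneous {A : SeqAlg} (X : NMod A) : Prop :=
  forall x y : X, (forall n, mnorm (act (pvec n) x) <= mnorm (act (pvec n) y)) ->
  mnorm x <= mnorm y.

Definition finite_type {A : SeqAlg} (X : NMod A) : Prop :=
  forall x : X, exists N, forall n, (N <= n)%nat -> act (pvec n) x = mzero.

Definition cat_H {A : SeqAlg} (X : NMod A) : Prop := essential X /\ homogeneous X.

Definition coord_sub {A : SeqAlg} (X : NMod A) (n : nat) (y : X) : Prop :=
  exists x, y = act (pvec n) x.

Definition finsupp {L : Type} (f : L -> C) : Prop :=
  exists l : list L, forall i, f i <> C0 -> In i l.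
Definition l1norm {L : Type} (f : L -> C) (r : R) : Prop :=
  exists l : list L, NoDup l /\ (forall i, f i <> C0 -> In i l) /\
    r = fold_right Rplus 0 (map (fun i => Cmod (f i)) l).

Definition iso_l10 {A : SeqAlg} (X : NMod A) (Y : X -> Prop) (L : Type) : Prop :=
  exists T : (L -> C) -> X,
    (forall f, finsupp f -> Y (T f)) /\
    (forall f g, finsupp f -> finsupp g ->
        T (fun i => Cadd (f i) (g i)) = madd (T f) (T g)) /\
    (forall c f, finsupp f -> T (fun i => Cmul c (f i)) = mscal c (T f)) /\
    (forall f r, finsupp f -> l1norm f r -> mnorm (T f) = r) /\
    (forall y, Y y -> exists f, finsupp f /\ T f = y).

(* Fix a coisometry [tau : Y -> X] between modules of H, a morphism [phi : P -> X] and a margin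
   [delta > 0].  On a coordinate [P_m], isometric to [l_1^0(L)], lift the images [phi (e_a)] of the
   unit vectors to [y_a] in [Y_m] with [||y_a|| <= (1 + delta) ||phi (e_a)||] and extend linearly;
   by the l_1 triangle inequality the lift [Psi_m] satisfies
   [||Psi_m z|| <= (1 + delta) ||phi u||] with [u = ||z|| e_b] for the unit vector [e_b] whose lift
   is longest.  As [P] has finite type, [psi x := sum_m Psi_m (p^m x)] is a finite sum, and it
   lifts [phi].  Summing the witnesses [u_m] of the coordinates of [x] gives [u] with
   [||p^m u|| = ||p^m x||] for all [m], hence [||u|| = ||x||] by homogeneity of [P]; homogeneity of
   [Y], compared through [tau] with [(1 + delta) phi u], then gives
   [||psi x|| <= (1 + delta) ||phi|| ||x||]. *)

From Stdlib Require Import Reals List Permutation Lra Lia ClassicalEpsilon FunctionalExtensionality.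
Open Scope R_scope.

Lemma C_ext (a b : C) : re a = re b -> im a = im b -> a = b.
Proof. destruct a, b; simpl; intros; subst; reflexivity. Qed.

Ltac ceq := apply C_ext; simpl; ring.

Lemma Cmod_real r : Cmod (mkC r 0) = Rabs r.
Proof. unfold Cmod; simpl. rewrite Rmult_0_l, Rplus_0_r. apply sqrt_Rsqr_abs. Qed.

Lemma Cmod_nonneg_real r : 0 <= r -> Cmod (mkC r 0) = r.
Proof. intro Hr. rewrite Cmod_real. apply Rabs_right. lra. Qed.

Lemma Cmod_C0 : Cmod C0 = 0.
Proof. apply Cmod_nonneg_real. lra. Qed.

Lemma Cmod_C1 : Cmod C1 = 1.
Proof. apply Cmod_nonneg_real. lra. Qed.

Lemma Cmod_ge0 c : 0 <= Cmod c.
Proof. apply sqrt_pos. Qed.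

Lemma Cmod_eq0 c : Cmod c = 0 -> c = C0.
Proof.
  unfold Cmod. intro H. apply sqrt_eq_0 in H; [|nra].
  apply C_ext; simpl; nra.
Qed.

Section ModuleAlgebra.
Context {A : SeqAlg} {M : NMod A}.
Implicit Types x y z : M.

Lemma madd_0r x : madd x mzero = x.
Proof. rewrite madd_comm. apply madd_0. Qed.

Lemma madd_cancel x y z : madd x y = madd x z -> y = z.
Proof.
  assert (Hl : forall w, madd (mopp x) (madd x w) = w).
  { intro w. rewrite madd_assoc, (madd_comm _ _ (mopp x) x), madd_opp. apply madd_0. }
  intro H. rewrite <- (Hl y), <- (Hl z), H. reflexivity.
Qed.

Lemma madd_idem_eq0 x : x = madd x x -> x = mzero.
Proof. intro H. symmetry. apply (madd_cancel x). rewrite madd_0r. exact H. Qed.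

Lemma mscal_C0 x : mscal C0 x = mzero.
Proof. apply madd_idem_eq0. rewrite <- mscal_addl. f_equal. ceq. Qed.

Lemma mscal_mzero c : mscal c (@mzero A M) = mzero.
Proof.
  rewrite <- (mscal_C0 mzero), mscal_mul. replace (Cmul c C0) with C0 by ceq.
  reflexivity.
Qed.

Lemma mnorm_mzero : mnorm (@mzero A M) = 0.
Proof. rewrite <- (mscal_C0 mzero), mnorm_scal, Cmod_C0. ring. Qed.

Lemma act_mzero a : inA A a -> act a (@mzero A M) = mzero.
Proof.
  intro Ha. rewrite <- (mscal_C0 mzero) at 1. rewrite act_scalr by exact Ha. apply mscal_C0.
Qed.

Lemma madd_mopp_scal x : madd x (mscal (mkC (-1) 0) x) = mzero.
Proof.
  rewrite <- (mscal_1 _ _ x) at 1. rewrite <- mscal_addl.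
  replace (Cadd C1 (mkC (-1) 0)) with C0 by ceq. apply mscal_C0.
Qed.

End ModuleAlgebra.

Lemma additive_mzero {A} {X Y : NMod A} (f : X -> Y) :
  (forall x y, f (madd x y) = madd (f x) (f y)) -> f mzero = mzero.
Proof. intro H. apply madd_idem_eq0. rewrite <- H, madd_0. reflexivity. Qed.

Lemma pvec_inA A n : inA A (pvec n).
Proof.
  apply inA_c00. exists (S n). intros k Hk. unfold pvec.
  destruct (Nat.eqb_spec k n); [lia | reflexivity].
Qed.

Section Coordinates.
Context {A : SeqAlg} {M : NMod A}.
Implicit Types x y : M.

Lemma act_pvec_scal m a x : inA A a -> act (smul (pvec m) a) x = mscal (a m) (act (pvec m) x).
Proof.
  intro Ha. replace (smul (pvec m) a) with (sscal (a m) (pvec m)).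
  - apply act_scall, pvec_inA.
  - apply functional_extensionality. intro k. unfold smul, sscal, pvec.
    destruct (Nat.eqb_spec k m); [subst; ceq | ceq].
Qed.

Lemma act_pvec_act m a x : inA A a -> act (pvec m) (act a x) = mscal (a m) (act (pvec m) x).
Proof. intro Ha. rewrite <- act_mul by (apply pvec_inA || exact Ha). now apply act_pvec_scal. Qed.

Lemma act_act_pvec m a x : inA A a -> act a (act (pvec m) x) = mscal (a m) (act (pvec m) x).
Proof.
  intro Ha. rewrite <- act_mul by (apply pvec_inA || exact Ha).
  rewrite <- act_pvec_scal by exact Ha. f_equal.
  apply functional_extensionality. intro k. unfold smul. ceq.
Qed.

Lemma act_on_coord m a x : inA A a -> act (pvec m) x = x -> act a x = mscal (a m) x.
Proof. intros Ha Hx. rewrite <- Hx. now rewrite act_act_pvec by exact Ha. Qed.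

Lemma act_pvec_idem n x : act (pvec n) (act (pvec n) x) = act (pvec n) x.
Proof.
  rewrite act_pvec_act by apply pvec_inA. unfold pvec. rewrite Nat.eqb_refl. apply mscal_1.
Qed.

Lemma act_pvec_orth m n x : m <> n -> act (pvec m) (act (pvec n) x) = mzero.
Proof.
  intro Hmn. rewrite act_pvec_act by apply pvec_inA. unfold pvec at 1.
  destruct (Nat.eqb_spec m n); [contradiction | apply mscal_C0].
Qed.

Lemma coord_sub_act_pvec n x : coord_sub M n x -> act (pvec n) x = x.
Proof. intros [w ->]. apply act_pvec_idem. Qed.

Lemma mnorm_act_pvec_le n x : mnorm (act (pvec n) x) <= mnorm x.
Proof.
  pose proof (act_contr _ M (pvec n) x (pvec_inA A n)) as H.
  rewrite nA_pvec in H. lra.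
Qed.

Lemma homogeneous_coord_eq x y : homogeneous M ->
  (forall n, act (pvec n) x = act (pvec n) y) -> x = y.
Proof.
  intros Hh H. set (y' := mscal (mkC (-1) 0) y).
  assert (Hz : madd x y' = mzero).
  { apply mnorm_zero, Rle_antisym; [|apply mnorm_nonneg].
    rewrite <- (@mnorm_mzero A M). apply Hh. intro n.
    unfold y'. rewrite act_addr, act_scalr, H, madd_mopp_scal, act_mzero by apply pvec_inA.
    apply Rle_refl. }
  rewrite <- (madd_0r x), <- (madd_mopp_scal y), (madd_comm _ _ y), madd_assoc.
  fold y'. rewrite Hz. apply madd_0.
Qed.

End Coordinates.

Definition lsum {A : SeqAlg} {M : NMod A} {L : Type} (g : L -> M) (l : list L) : M :=
  fold_right (fun a s => madd (g a) s) mzero l.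

Section ListSums.
Context {A : SeqAlg} {M : NMod A} {L : Type}.
Implicit Types (g h : L -> M) (l : list L).

Lemma lsum_ext g h l : (forall a, In a l -> g a = h a) -> lsum g l = lsum h l.
Proof. induction l; simpl; intros H; [reflexivity|]. rewrite H by auto. f_equal. auto. Qed.

Lemma lsum_add g h l : lsum (fun a => madd (g a) (h a)) l = madd (lsum g l) (lsum h l).
Proof.
  induction l; simpl; [now rewrite madd_0|].
  rewrite IHl, !madd_assoc. f_equal. rewrite <- !madd_assoc. f_equal. apply madd_comm.
Qed.

Lemma lsum_morph {Y : NMod A} (F : M -> Y) g l :
  (forall x y, F (madd x y) = madd (F x) (F y)) -> F (lsum g l) = lsum (fun a => F (g a)) l.
Proof. intro HF. induction l; simpl; [now apply additive_mzero|]. now rewrite HF, IHl. Qed.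

Lemma lsum_perm g l l' : Permutation l l' -> lsum g l = lsum g l'.
Proof.
  induction 1 as [| a l l' _ IH | a b l | l l' l'' _ IH1 _ IH2]; simpl.
  - reflexivity.
  - now rewrite IH.
  - now rewrite !madd_assoc, (madd_comm _ _ (g b)).
  - now rewrite IH1.
Qed.

Definition nonzero_at g (a : L) : bool :=
  if excluded_middle_informative (g a = mzero) then false else true.

Lemma lsum_filter_nonzero g l : lsum g (filter (nonzero_at g) l) = lsum g l.
Proof.
  induction l as [|a l IH]; simpl; [reflexivity|]. unfold nonzero_at at 1.
  destruct (excluded_middle_informative (g a = mzero)) as [E|_]; simpl.
  - now rewrite E, madd_0.
  - now rewrite IH.
Qed.

Lemma lsum_support_indep g l l' : NoDup l -> NoDup l' ->
  (forall a, g a <> mzero -> In a l) -> (forall a, g a <> mzero -> In a l') ->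
  lsum g l = lsum g l'.
Proof.
  intros Hl Hl' Hc Hc'. rewrite <- lsum_filter_nonzero, <- (lsum_filter_nonzero g l').
  apply lsum_perm, NoDup_Permutation; try now apply NoDup_filter.
  intro a. rewrite !filter_In. unfold nonzero_at.
  destruct (excluded_middle_informative (g a = mzero)) as [_|E].
  - split; intros [_ H]; discriminate.
  - split; intros _; auto.
Qed.

Lemma mnorm_lsum_le g l :
  mnorm (lsum g l) <= fold_right Rplus 0 (map (fun a => mnorm (g a)) l).
Proof.
  induction l; simpl; [rewrite mnorm_mzero; lra|].
  eapply Rle_trans; [apply mnorm_triangle | lra].
Qed.

End ListSums.

Fixpoint msum {A : SeqAlg} {M : NMod A} (g : nat -> M) (N : nat) : M :=
  match N with O => mzero | S n => madd (msum g n) (g n) end.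

Section NatSums.
Context {A : SeqAlg} {M : NMod A}.
Implicit Types (g h : nat -> M).

Lemma msum_ext g h N : (forall m, (m < N)%nat -> g m = h m) -> msum g N = msum h N.
Proof.
  induction N; simpl; intros H; [reflexivity|].
  rewrite IHN by (intros; apply H; lia). now rewrite H by lia.
Qed.

Lemma msum_add g h N : msum (fun m => madd (g m) (h m)) N = madd (msum g N) (msum h N).
Proof.
  induction N; simpl; [now rewrite madd_0|].
  rewrite IHN, !madd_assoc. f_equal. rewrite <- !madd_assoc. f_equal. apply madd_comm.
Qed.

Lemma msum_morph {Y : NMod A} (F : M -> Y) g N :
  (forall x y, F (madd x y) = madd (F x) (F y)) -> F (msum g N) = msum (fun m => F (g m)) N.
Proof. intro HF. induction N; simpl; [now apply additive_mzero|]. now rewrite HF, IHN. Qed.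

Lemma msum_tail g N0 N : (forall m, (N0 <= m)%nat -> g m = mzero) -> (N0 <= N)%nat ->
  msum g N = msum g N0.
Proof. intros H HN. induction HN; simpl; [reflexivity|]. now rewrite H, madd_0r by lia. Qed.

Lemma act_pvec_msum_if g N k : (forall m, act (pvec m) (g m) = g m) ->
  act (pvec k) (msum g N) = if Nat.ltb k N then g k else mzero.
Proof.
  intros Hg. induction N as [|N IH]; simpl; [apply act_mzero, pvec_inA|].
  rewrite act_addr by apply pvec_inA. rewrite IH, <- (Hg N) at 1.
  destruct (Nat.eq_dec k N) as [->|Hk].
  - rewrite act_pvec_idem, Hg, Nat.ltb_irrefl, (proj2 (Nat.ltb_lt N (S N))) by lia.
    apply madd_0.
  - rewrite act_pvec_orth, madd_0r by exact Hk.
    destruct (Nat.ltb_spec k N), (Nat.ltb_spec k (S N)); try lia; reflexivity.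
Qed.

Lemma act_pvec_msum g N k : (forall m, act (pvec m) (g m) = g m) ->
  (forall m, (N <= m)%nat -> g m = mzero) -> act (pvec k) (msum g N) = g k.
Proof.
  intros Hg Hz. rewrite act_pvec_msum_if by exact Hg.
  destruct (Nat.ltb_spec k N); [reflexivity | symmetry; apply Hz; lia].
Qed.

End NatSums.

Section OperatorNorm.
Context {A : SeqAlg} {X Y : NMod A} (f : X -> Y).

Lemma opnorm_ge0 r : is_morph f -> opnorm f r -> 0 <= r.
Proof.
  intros [Hadd _] [Hub _]. apply Hub. exists mzero.
  rewrite additive_mzero, !mnorm_mzero by exact Hadd. split; lra.
Qed.

Lemma opnorm_bound r : is_morph f -> opnorm f r -> forall x, mnorm (f x) <= r * mnorm x.
Proof.
  intros Hf Hr x.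
  destruct Hf as [Hadd [Hsc _]].
  destruct (Req_dec (mnorm x) 0) as [H0|H0].
  { apply mnorm_zero in H0. subst. rewrite additive_mzero, !mnorm_mzero by exact Hadd. lra. }
  assert (Hp : 0 < mnorm x) by (pose proof (mnorm_nonneg _ _ x); lra).
  set (c := mkC (/ mnorm x) 0).
  assert (Hc : Cmod c = / mnorm x) by (apply Cmod_nonneg_real; left; apply Rinv_0_lt_compat, Hp).
  assert (Hle : / mnorm x * mnorm (f x) <= r).
  { apply (proj1 Hr). exists (mscal c x).
    rewrite Hsc, !mnorm_scal, Hc, Rinv_l by lra. split; [lra | reflexivity]. }
  apply (Rmult_le_compat_l (mnorm x)) in Hle; [|lra].
  rewrite <- Rmult_assoc, Rinv_r in Hle; lra.
Qed.

Lemma opnorm_exists : is_morph f -> exists r, opnorm f r.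
Proof.
  intros [_ [_ [_ [K HK]]]].
  edestruct completeness as [r Hr]; [| |exists r; exact Hr].
  - exists (Rmax K 0). intros t [x [Hx ->]]. eapply Rle_trans; [apply HK|].
    pose proof (mnorm_nonneg _ _ x). pose proof (Rmax_l K 0). pose proof (Rmax_r K 0).
    apply Rle_trans with (Rmax K 0 * mnorm x); [apply Rmult_le_compat_r; lra | nra].
  - exists (mnorm (f mzero)). exists mzero. rewrite mnorm_mzero. split; [lra | reflexivity].
Qed.

Lemma opnorm_le r K : opnorm f r -> 0 <= K -> (forall x, mnorm (f x) <= K * mnorm x) -> r <= K.
Proof.
  intros [_ Hlub] HK H. apply Hlub. intros t [x [Hx ->]].
  eapply Rle_trans; [apply H|]. apply Rle_trans with (K * 1); [apply Rmult_le_compat_l|]; lra.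
Qed.

End OperatorNorm.

Section Coisometries.
Context {A : SeqAlg} {X Y : NMod A} (tau : Y -> X) (Htau : coisometric tau).

Lemma coisometric_contractive y : mnorm (tau y) <= mnorm y.
Proof.
  destruct Htau as [Hm [[r [Hr Hr1]] _]].
  pose proof (opnorm_bound tau r Hm Hr y). pose proof (mnorm_nonneg _ _ y). nra.
Qed.

Lemma coisometric_lift_coord m x delta : 0 < delta -> act (pvec m) x = x ->
  exists y, tau y = x /\ act (pvec m) y = y /\ mnorm y <= (1 + delta) * mnorm x.
Proof.
  destruct Htau as [[tadd [_ [tact _]]] [_ Hlift]]. intros Hd Hx.
  destruct (Req_dec (mnorm x) 0) as [H0|H0].
  { exists mzero. apply mnorm_zero in H0. subst x.
    rewrite additive_mzero, act_mzero, !mnorm_mzero by (apply pvec_inA || exact tadd).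
    repeat split. lra. }
  assert (Hp : 0 < mnorm x) by (pose proof (mnorm_nonneg _ _ x); lra).
  destruct (Hlift x (delta * mnorm x)) as [y [Hy Hyn]]; [nra|].
  exists (act (pvec m) y). repeat split.
  - now rewrite tact, Hy by apply pvec_inA.
  - apply act_pvec_idem.
  - pose proof (mnorm_act_pvec_le m y). lra.
Qed.

(* Lifting [x] with almost no loss of norm lets homogeneity of [Y] compare [y] with that lift. *)
Lemma homogeneous_dominated_by_quotient (y : Y) (x : X) : homogeneous Y ->
  (forall k, mnorm (act (pvec k) y) <= mnorm (act (pvec k) x)) -> mnorm y <= mnorm x.
Proof.
  intros Hh Hyx. destruct Htau as [[_ [_ [tact _]]] [_ Hlift]].
  apply Rle_plus_epsilon. intros d Hd.
  destruct (Hlift x d Hd) as [v [<- Hv]].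
  enough (mnorm y <= mnorm v) by lra.
  apply Hh. intro k. eapply Rle_trans; [apply Hyx|].
  rewrite <- tact by apply pvec_inA. apply coisometric_contractive.
Qed.

End Coisometries.

Section FinitelySupported.
Context {L : Type}.
Implicit Types (f g : L -> C) (l : list L).

Definition cover f l : Prop := forall i, f i <> C0 -> In i l.

Definition l1sum f l : R := fold_right Rplus 0 (map (fun i => Cmod (f i)) l).

Definition l1_unit (a : L) : L -> C :=
  fun i => if excluded_middle_informative (i = a) then C1 else C0.

Lemma finsupp_nodup_cover f : finsupp f -> exists l, NoDup l /\ cover f l.
Proof.
  intros [l Hl]. exists (nodup (fun i j : L => excluded_middle_informative (i = j)) l).
  split; [apply NoDup_nodup|]. intros i Hi. apply nodup_In. auto.
Qed.

Lemma cover_app_add f g l l' :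
  cover f l -> cover g l' -> cover (fun i => Cadd (f i) (g i)) (l ++ l').
Proof.
  intros Hf Hg i Hi. apply in_or_app.
  destruct (excluded_middle_informative (f i = C0)) as [E|E]; [|auto].
  right. apply Hg. intro E'. apply Hi. rewrite E, E'. ceq.
Qed.

Lemma cover_scal f l c : cover f l -> cover (fun i => Cmul c (f i)) l.
Proof. intros Hf i Hi. apply Hf. intro E. apply Hi. rewrite E. ceq. Qed.

Lemma finsupp_add f g : finsupp f -> finsupp g -> finsupp (fun i => Cadd (f i) (g i)).
Proof. intros [l Hl] [l' Hl']. exists (l ++ l'). now apply cover_app_add. Qed.

Lemma finsupp_scal c f : finsupp f -> finsupp (fun i => Cmul c (f i)).
Proof. intros [l Hl]. exists l. now apply cover_scal. Qed.

Lemma cover_l1_unit a : cover (l1_unit a) (a :: nil).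
Proof.
  intros i Hi. unfold l1_unit in Hi.
  destruct (excluded_middle_informative (i = a)); [now left | congruence].
Qed.

Lemma finsupp_l1_unit a : finsupp (l1_unit a).
Proof. exists (a :: nil). apply cover_l1_unit. Qed.

Lemma l1sum_eq0 f l : l1sum f l = 0 -> forall i, In i l -> f i = C0.
Proof.
  assert (Hpos : forall l0, 0 <= l1sum f l0).
  { unfold l1sum. induction l0 as [|a l0 IH]; simpl; [lra|]. pose proof (Cmod_ge0 (f a)). lra. }
  induction l as [|a l IH]; intros Hs i Hi; [destruct Hi|].
  pose proof (Hpos l). pose proof (Cmod_ge0 (f a)). unfold l1sum in *. simpl in Hs.
  destruct Hi as [<-|Hi].
  - apply Cmod_eq0. lra.
  - apply IH; [lra | exact Hi].
Qed.

Lemma exists_argmax_list (h : L -> R) a l :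
  exists b, In b (a :: l) /\ forall c, In c (a :: l) -> h c <= h b.
Proof.
  induction l as [|x l [b [Hb Hmax]]].
  - exists a. split; [now left|]. intros c [<-|[]]. lra.
  - destruct (Rle_dec (h x) (h b)).
    + exists b. split; [simpl in *; tauto|].
      intros c [<-|[<-|Hc]]; [apply Hmax; now left | lra | apply Hmax; now right].
    + exists x. split; [simpl; tauto|].
      intros c [<-|[<-|Hc]];
        [pose proof (Hmax _ (or_introl eq_refl)) | | pose proof (Hmax c (or_intror Hc))]; lra.
Qed.

End FinitelySupported.

Section LinearCombinations.
Context {A : SeqAlg} {W : NMod A} {L : Type} (y : L -> W).
Implicit Types (f g : L -> C) (l : list L).

(* [nil] when [f] is not finitely supported. *)
Definition support_list f : list L := epsilon (inhabits nil) (fun l => NoDup l /\ cover f l).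

Definition l1_combine f : W := lsum (fun a => mscal (f a) (y a)) (support_list f).

Lemma l1_combine_eq f l : NoDup l -> cover f l ->
  l1_combine f = lsum (fun a => mscal (f a) (y a)) l.
Proof.
  intros Hl Hc. destruct (epsilon_spec (inhabits nil) (fun l => NoDup l /\ cover f l))
    as [Hs Hcs]; [now exists l|].
  assert (Hnz : forall l', cover f l' -> forall a, mscal (f a) (y a) <> mzero -> In a l').
  { intros l' Hc' a Ha. apply Hc'. intro E. apply Ha. rewrite E. apply mscal_C0. }
  apply lsum_support_indep; auto.
Qed.

Lemma l1_combine_add f g : finsupp f -> finsupp g ->
  l1_combine (fun i => Cadd (f i) (g i)) = madd (l1_combine f) (l1_combine g).
Proof.
  intros Hf Hg. destruct (finsupp_nodup_cover f Hf) as [l1 [_ Hc1]].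
  destruct (finsupp_nodup_cover g Hg) as [l2 [_ Hc2]].
  set (l := nodup (fun i j : L => excluded_middle_informative (i = j)) (l1 ++ l2)).
  assert (Hl : NoDup l) by apply NoDup_nodup.
  assert (Hwiden : forall h l', cover h l' -> incl l' (l1 ++ l2) -> cover h l).
  { intros h l' Hh Hi i Hz. apply nodup_In, Hi, Hh, Hz. }
  assert (Hcf : cover f l) by (apply (Hwiden _ _ Hc1), incl_appl, incl_refl).
  assert (Hcg : cover g l) by (apply (Hwiden _ _ Hc2), incl_appr, incl_refl).
  assert (Hcfg : cover (fun i => Cadd (f i) (g i)) l)
    by (apply (Hwiden _ _ (cover_app_add f g l1 l2 Hc1 Hc2)), incl_refl).
  rewrite !(l1_combine_eq _ l) by assumption.
  rewrite <- lsum_add. apply lsum_ext. intros a _. apply mscal_addl.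
Qed.

Lemma l1_combine_scal c f : finsupp f ->
  l1_combine (fun i => Cmul c (f i)) = mscal c (l1_combine f).
Proof.
  intros Hf. destruct (finsupp_nodup_cover f Hf) as [l [Hl Hc]].
  rewrite !(l1_combine_eq _ l) by (auto using cover_scal).
  rewrite (lsum_morph (mscal c)) by apply mscal_addr.
  apply lsum_ext. intros a _. symmetry. apply mscal_mul.
Qed.

Lemma mnorm_l1_combine_le f l B : NoDup l -> cover f l ->
  (forall a, In a l -> mnorm (y a) <= B) -> mnorm (l1_combine f) <= l1sum f l * B.
Proof.
  intros Hl Hc HB. rewrite (l1_combine_eq f l Hl Hc).
  eapply Rle_trans; [apply mnorm_lsum_le|]. clear Hl Hc. unfold l1sum.
  induction l as [|a l IH]; simpl; [lra|].
  rewrite mnorm_scal, Rmult_plus_distr_r.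
  pose proof (HB a (or_introl eq_refl)). pose proof (Cmod_ge0 (f a)).
  pose proof (IH (fun b Hb => HB b (or_intror Hb))). nra.
Qed.

End LinearCombinations.

Definition is_l10_iso {A : SeqAlg} (X : NMod A) (Yp : X -> Prop) (L : Type)
  (T : (L -> C) -> X) : Prop :=
    (forall f, finsupp f -> Yp (T f)) /\
    (forall f g, finsupp f -> finsupp g ->
        T (fun i => Cadd (f i) (g i)) = madd (T f) (T g)) /\
    (forall c f, finsupp f -> T (fun i => Cmul c (f i)) = mscal c (T f)) /\
    (forall f r, finsupp f -> l1norm f r -> mnorm (T f) = r) /\
    (forall y, Yp y -> exists f, finsupp f /\ T f = y).

Definition l10_coeffs {A : SeqAlg} {X : NMod A} {L : Type} (T : (L -> C) -> X) (z : X) : L -> C :=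
  epsilon (inhabits (fun _ => C0)) (fun f => finsupp f /\ T f = z).

Section L10Isometry.
Context {A : SeqAlg} {X : NMod A} {Yp : X -> Prop} {L : Type} {T : (L -> C) -> X}.
Hypothesis HT : is_l10_iso X Yp L T.

Lemma l10_iso_in f : finsupp f -> Yp (T f).
Proof. apply HT. Qed.

Lemma l10_iso_add f g : finsupp f -> finsupp g ->
  T (fun i => Cadd (f i) (g i)) = madd (T f) (T g).
Proof. apply HT. Qed.

Lemma l10_iso_scal c f : finsupp f -> T (fun i => Cmul c (f i)) = mscal c (T f).
Proof. apply HT. Qed.

Lemma l10_iso_norm f l : NoDup l -> cover f l -> mnorm (T f) = l1sum f l.
Proof. intros Hl Hc. apply HT; [now exists l | now exists l]. Qed.

Lemma l10_iso_onto z : Yp z -> exists f, finsupp f /\ T f = z.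
Proof. apply HT. Qed.

Lemma l10_iso_zero : T (fun _ => C0) = mzero.
Proof.
  apply mnorm_zero. rewrite (l10_iso_norm _ nil); [reflexivity | constructor |].
  intros i Hi. contradiction.
Qed.

Lemma l10_iso_unit_norm a : mnorm (T (l1_unit a)) = 1.
Proof.
  assert (Hnd : NoDup (a :: nil)) by (constructor; [intros [] | constructor]).
  rewrite (l10_iso_norm _ (a :: nil) Hnd (cover_l1_unit a)).
  unfold l1sum, l1_unit. simpl. destruct (excluded_middle_informative (a = a)); [|congruence].
  rewrite Cmod_C1. ring.
Qed.

Lemma l10_iso_inj f g : finsupp f -> finsupp g -> T f = T g -> f = g.
Proof.
  intros Hf Hg Heq.
  set (h := fun i => Cadd (f i) (Cmul (mkC (-1) 0) (g i))).
  assert (Hh : finsupp h) by now apply finsupp_add, finsupp_scal.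
  assert (HTh : T h = mzero).
  { unfold h. rewrite l10_iso_add, l10_iso_scal, Heq by auto using finsupp_scal.
    apply madd_mopp_scal. }
  destruct (finsupp_nodup_cover h Hh) as [l [Hl Hc]].
  pose proof (l10_iso_norm h l Hl Hc) as Hn. rewrite HTh, mnorm_mzero in Hn.
  apply functional_extensionality. intro i.
  assert (Hi : h i = C0).
  { destruct (excluded_middle_informative (h i = C0)) as [|E]; [assumption|].
    apply (l1sum_eq0 h l); auto. }
  unfold h, Cadd, Cmul, C0 in Hi. simpl in Hi. injection Hi. intros.
  apply C_ext; lra.
Qed.

Lemma l10_iso_expand f l : NoDup l -> cover f l ->
  T f = lsum (fun a => mscal (f a) (T (l1_unit a))) l.
Proof.
  revert f. induction l as [|a l IH]; intros f Hl Hc; simpl.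
  - replace f with (fun _ : L => C0) by (apply functional_extensionality; intro i;
      destruct (excluded_middle_informative (f i = C0)) as [|E]; [auto | destruct (Hc i E)]).
    apply l10_iso_zero.
  - inversion Hl as [|a0 l0 Ha Hl']; subst.
    set (f' := fun i => if excluded_middle_informative (i = a) then C0 else f i).
    assert (Hc' : cover f' l).
    { intros i Hi. unfold f' in Hi. destruct (excluded_middle_informative (i = a)); [congruence|].
      destruct (Hc i Hi); [congruence | assumption]. }
    assert (Hf : f = fun i => Cadd (Cmul (f a) (l1_unit a i)) (f' i)).
    { apply functional_extensionality. intro i. unfold f', l1_unit.
      destruct (excluded_middle_informative (i = a)); [subst; ceq | ceq]. }
    assert (Hu : finsupp (l1_unit a)) by apply finsupp_l1_unit.
    assert (Hf' : finsupp f') by (now exists l).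
    rewrite Hf at 1. rewrite l10_iso_add, l10_iso_scal, (IH f' Hl' Hc')
      by (exact Hu || exact Hf' || now apply finsupp_scal).
    f_equal. apply lsum_ext. intros b Hb. unfold f'.
    destruct (excluded_middle_informative (b = a)); [subst; contradiction | reflexivity].
Qed.

Lemma l10_coeffs_spec z : Yp z -> finsupp (l10_coeffs T z) /\ T (l10_coeffs T z) = z.
Proof.
  intro Hz. apply (epsilon_spec _ (fun f => finsupp f /\ T f = z)). now apply l10_iso_onto.
Qed.

Lemma l10_coeffs_T f : finsupp f -> l10_coeffs T (T f) = f.
Proof.
  intro Hf. destruct (l10_coeffs_spec (T f)) as [Hc HTc]; [now apply l10_iso_in|].
  now apply l10_iso_inj.
Qed.

Lemma l10_coeffs_add z1 z2 : Yp z1 -> Yp z2 ->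
  l10_coeffs T (madd z1 z2) = fun i => Cadd (l10_coeffs T z1 i) (l10_coeffs T z2 i).
Proof.
  intros H1 H2. destruct (l10_coeffs_spec z1 H1) as [F1 <-], (l10_coeffs_spec z2 H2) as [F2 <-].
  rewrite <- l10_iso_add, !l10_coeffs_T by (auto using finsupp_add). reflexivity.
Qed.

Lemma l10_coeffs_scal c z : Yp z ->
  l10_coeffs T (mscal c z) = fun i => Cmul c (l10_coeffs T z i).
Proof.
  intro Hz. destruct (l10_coeffs_spec z Hz) as [F <-].
  rewrite <- l10_iso_scal, !l10_coeffs_T by (auto using finsupp_scal). reflexivity.
Qed.

End L10Isometry.

Lemma coord_sub_mzero {A} (X : NMod A) n : coord_sub X n mzero.
Proof. exists mzero. symmetry. apply act_mzero, pvec_inA. Qed.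

Lemma coord_sub_scal {A} (X : NMod A) n c (z : X) : coord_sub X n z -> coord_sub X n (mscal c z).
Proof. intros [w ->]. exists (mscal c w). now rewrite act_scalr by apply pvec_inA. Qed.

Lemma morph_act_pvec {A} {X Y : NMod A} (f : X -> Y) n x :
  is_morph f -> act (pvec n) (f x) = f (act (pvec n) x).
Proof. intros [_ [_ [Hact _]]]. symmetry. apply Hact, pvec_inA. Qed.

(* The existential in [clift_norm] is a coordinatewise form of [||Psi|| <= (1 + delta) ||phi||];
   keeping the witness [u] is what allows the coordinates to be glued through homogeneity. *)
Record coordinate_lift {A : SeqAlg} {P X Y : NMod A} (tau : Y -> X) (phi : P -> X)
    (delta : R) (m : nat) (Psi : P -> Y) : Prop := {
  clift_add : forall z1 z2, coord_sub P m z1 -> coord_sub P m z2 ->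
    Psi (madd z1 z2) = madd (Psi z1) (Psi z2);
  clift_scal : forall c z, coord_sub P m z -> Psi (mscal c z) = mscal c (Psi z);
  clift_coord : forall z, act (pvec m) (Psi z) = Psi z;
  clift_lifts : forall z, coord_sub P m z -> tau (Psi z) = phi z;
  clift_norm : forall z, coord_sub P m z -> exists u, coord_sub P m u /\
    mnorm u = mnorm z /\ mnorm (Psi z) <= (1 + delta) * mnorm (phi u)
}.

Definition basis_lift_spec {A : SeqAlg} {P X Y : NMod A} (tau : Y -> X) (phi : P -> X)
    (delta : R) (m : nat) {L : Type} (T : (L -> C) -> P) (y : L -> Y) : Prop :=
  forall a, tau (y a) = phi (T (l1_unit a)) /\ act (pvec m) (y a) = y a /\
    mnorm (y a) <= (1 + delta) * mnorm (phi (T (l1_unit a))).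

Section CoordinateLift.
Context {A : SeqAlg} {P X Y : NMod A} (tau : Y -> X) (phi : P -> X) (delta : R) (m : nat).
Context {L : Type} (T : (L -> C) -> P).
Hypotheses (Htau : coisometric tau) (Hphi : is_morph phi) (HT : is_l10_iso P (coord_sub P m) L T).

Lemma basis_lift_exists : 0 < delta -> exists y, basis_lift_spec tau phi delta m T y.
Proof.
  intro Hdelta. apply (choice (fun a (y : Y) => tau y = phi (T (l1_unit a)) /\
    act (pvec m) y = y /\ mnorm y <= (1 + delta) * mnorm (phi (T (l1_unit a))))).
  intro a. apply coisometric_lift_coord; [exact Htau | exact Hdelta |].
  rewrite morph_act_pvec, coord_sub_act_pvec by
    (exact Hphi || apply (l10_iso_in HT), finsupp_l1_unit). reflexivity.
Qed.

Variable y : L -> Y.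
Hypothesis Hy : basis_lift_spec tau phi delta m T y.

Definition basis_extension (z : P) : Y := l1_combine y (l10_coeffs T z).

Lemma basis_extension_coord z : act (pvec m) (basis_extension z) = basis_extension z.
Proof.
  unfold basis_extension, l1_combine.
  rewrite (lsum_morph (act (pvec m))) by (intros; apply act_addr, pvec_inA).
  apply lsum_ext. intros a _. rewrite act_scalr by apply pvec_inA. f_equal. apply Hy.
Qed.

Lemma basis_extension_lifts z : coord_sub P m z -> tau (basis_extension z) = phi z.
Proof.
  pose proof Htau as [[tadd [tsc _]] _]. pose proof Hphi as [padd [psc _]].
  intro Hz. destruct (l10_coeffs_spec HT z Hz) as [Hf HTf]. unfold basis_extension.
  set (f := l10_coeffs T z) in *. destruct (finsupp_nodup_cover f Hf) as [l [Hl Hc]].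
  rewrite (l1_combine_eq y f l Hl Hc), <- HTf, (l10_iso_expand HT f l Hl Hc),
    (lsum_morph tau), (lsum_morph phi) by assumption.
  apply lsum_ext. intros a _. rewrite tsc, psc. f_equal. apply Hy.
Qed.

Lemma basis_extension_norm z : coord_sub P m z -> exists u, coord_sub P m u /\
  mnorm u = mnorm z /\ mnorm (basis_extension z) <= (1 + delta) * mnorm (phi u).
Proof.
  pose proof Hphi as [_ [psc _]].
  intro Hz. destruct (l10_coeffs_spec HT z Hz) as [Hf HTf]. unfold basis_extension.
  set (f := l10_coeffs T z) in *. destruct (finsupp_nodup_cover f Hf) as [l [Hl Hc]].
  assert (Hnz : mnorm z = l1sum f l) by (rewrite <- HTf; apply (l10_iso_norm HT f l Hl Hc)).
  destruct l as [|a l0].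
  - exists mzero. split; [apply coord_sub_mzero|].
    rewrite mnorm_mzero, Hnz. split; [reflexivity|].
    eapply Rle_trans; [apply (mnorm_l1_combine_le y f nil 0 Hl Hc); intros _ []|].
    rewrite (additive_mzero phi), mnorm_mzero by apply Hphi. unfold l1sum. simpl. lra.
  - destruct (exists_argmax_list (fun b => mnorm (y b)) a l0) as [b [_ Hmax]].
    exists (mscal (mkC (mnorm z) 0) (T (l1_unit b))).
    pose proof (mnorm_nonneg _ _ z) as Hz0.
    split; [apply coord_sub_scal, (l10_iso_in HT), finsupp_l1_unit|].
    rewrite psc, !mnorm_scal, Cmod_nonneg_real, (l10_iso_unit_norm HT) by exact Hz0.
    split; [ring|].
    eapply Rle_trans; [apply (mnorm_l1_combine_le y f _ _ Hl Hc Hmax)|].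
    rewrite <- Hnz. destruct (Hy b) as [_ [_ Hyb]].
    apply Rle_trans with (mnorm z * ((1 + delta) * mnorm (phi (T (l1_unit b)))));
      [apply Rmult_le_compat_l; assumption | right; ring].
Qed.

Lemma basis_extension_coordinate_lift : coordinate_lift tau phi delta m basis_extension.
Proof.
  constructor.
  - intros z1 z2 H1 H2. unfold basis_extension. rewrite (l10_coeffs_add HT) by assumption.
    apply l1_combine_add; apply (l10_coeffs_spec HT); assumption.
  - intros c z Hz. unfold basis_extension. rewrite (l10_coeffs_scal HT) by assumption.
    apply l1_combine_scal, (l10_coeffs_spec HT), Hz.
  - exact basis_extension_coord.
  - exact basis_extension_lifts.
  - exact basis_extension_norm.
Qed.

End CoordinateLift.

Lemma coordinate_lift_exists {A : SeqAlg} {P X Y : NMod A} (tau : Y -> X) (phi : P -> X)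
    (delta : R) (m : nat) :
  coisometric tau -> is_morph phi -> 0 < delta -> (exists L, iso_l10 P (coord_sub P m) L) ->
  exists Psi, coordinate_lift tau phi delta m Psi.
Proof.
  intros Htau Hphi Hdelta [L [T HT]].
  destruct (basis_lift_exists tau phi delta m T Htau Hphi HT Hdelta) as [y Hy].
  exists (basis_extension T y).
  exact (basis_extension_coordinate_lift tau phi delta m T Htau Hphi HT y Hy).
Qed.

Definition coord_bound {A : SeqAlg} {P : NMod A} (x : P) : nat :=
  epsilon (inhabits 0%nat) (fun N => forall n, (N <= n)%nat -> act (pvec n) x = mzero).

Section Gluing.
Context {A : SeqAlg} {P X Y : NMod A} (tau : Y -> X) (phi : P -> X) (delta : R).
Context (Psi : nat -> P -> Y).
Hypotheses (HhP : homogeneous P) (HfP : finite_type P) (HhY : homogeneous Y)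
  (Htau : coisometric tau) (Hphi : is_morph phi) (Hdelta : 0 < delta)
  (HPsi : forall m, coordinate_lift tau phi delta m (Psi m)).

Lemma coord_bound_spec (x : P) n : (coord_bound x <= n)%nat -> act (pvec n) x = mzero.
Proof.
  revert n. apply (epsilon_spec _ (fun N => forall n, (N <= n)%nat -> act (pvec n) x = mzero)).
  apply HfP.
Qed.

Lemma Psi_mzero m : Psi m mzero = mzero.
Proof.
  apply madd_idem_eq0. rewrite <- (clift_add _ _ _ _ _ (HPsi m)) by apply coord_sub_mzero.
  now rewrite madd_0.
Qed.

Definition glue (x : P) : Y := msum (fun m => Psi m (act (pvec m) x)) (coord_bound x).

Lemma glue_eq x N : (forall n, (N <= n)%nat -> act (pvec n) x = mzero) ->
  glue x = msum (fun m => Psi m (act (pvec m) x)) N.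
Proof.
  intros HN. unfold glue.
  assert (Hz : forall N0, (forall n, (N0 <= n)%nat -> act (pvec n) x = mzero) ->
    forall n, (N0 <= n)%nat -> Psi n (act (pvec n) x) = mzero).
  { intros N0 H0 n Hn. rewrite H0 by exact Hn. apply Psi_mzero. }
  destruct (Nat.le_ge_cases N (coord_bound x)).
  - apply msum_tail; [apply Hz, HN | assumption].
  - symmetry. apply msum_tail; [apply Hz, coord_bound_spec | assumption].
Qed.

Lemma act_pvec_glue k x : act (pvec k) (glue x) = Psi k (act (pvec k) x).
Proof.
  apply (act_pvec_msum (fun m => Psi m (act (pvec m) x))); [intro m; apply (HPsi m) |].
  intros m Hm. rewrite coord_bound_spec by exact Hm. apply Psi_mzero.
Qed.

Lemma msum_coords (x : P) : msum (fun m => act (pvec m) x) (coord_bound x) = x.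
Proof.
  apply homogeneous_coord_eq; [exact HhP|]. intro k.
  apply (act_pvec_msum (fun m => act (pvec m) x));
    [intro m; apply act_pvec_idem | apply coord_bound_spec].
Qed.

Lemma glue_lifts x : tau (glue x) = phi x.
Proof.
  destruct Htau as [[tadd _] _]. destruct Hphi as [padd _].
  transitivity (phi (msum (fun m => act (pvec m) x) (coord_bound x))); [|now rewrite msum_coords].
  unfold glue. rewrite (msum_morph tau), (msum_morph phi) by assumption.
  apply msum_ext. intros m _. apply (HPsi m). now exists x.
Qed.

Lemma glue_norm_witness (x : P) : exists u : P,
  (forall k, mnorm (act (pvec k) u) = mnorm (act (pvec k) x)) /\
  (forall k, mnorm (act (pvec k) (glue x)) <= (1 + delta) * mnorm (act (pvec k) (phi u))).
Proof.
  destruct (choice (fun k (u : P) => coord_sub P k u /\ mnorm u = mnorm (act (pvec k) x) /\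
     mnorm (Psi k (act (pvec k) x)) <= (1 + delta) * mnorm (phi u))) as [uk Huk].
  { intro k. apply (HPsi k). now exists x. }
  assert (Hcoord : forall k, act (pvec k) (msum uk (coord_bound x)) = uk k).
  { intro k. apply act_pvec_msum; [intro m; apply coord_sub_act_pvec, Huk |].
    intros m Hm. apply mnorm_zero. destruct (Huk m) as [_ [-> _]].
    rewrite coord_bound_spec by exact Hm. apply mnorm_mzero. }
  exists (msum uk (coord_bound x)). split; intro k.
  - rewrite Hcoord. apply Huk.
  - rewrite act_pvec_glue, morph_act_pvec, Hcoord by exact Hphi. apply Huk.
Qed.

Lemma glue_norm R0 : opnorm phi R0 -> forall x, mnorm (glue x) <= (1 + delta) * R0 * mnorm x.
Proof.
  intros HR0 x. destruct (glue_norm_witness x) as [u [Hux Hglue]].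
  assert (Hun : mnorm u = mnorm x) by (apply Rle_antisym; apply HhP; intro k; rewrite Hux; lra).
  set (c := mkC (1 + delta) 0).
  assert (Hc : Cmod c = 1 + delta) by (apply Cmod_nonneg_real; lra).
  apply Rle_trans with (mnorm (mscal c (phi u))).
  - apply (homogeneous_dominated_by_quotient tau Htau); [exact HhY|]. intro k.
    rewrite act_scalr, mnorm_scal, Hc by apply pvec_inA. apply Hglue.
  - rewrite mnorm_scal, Hc, <- Hun, Rmult_assoc.
    apply Rmult_le_compat_l; [lra | exact (opnorm_bound phi R0 Hphi HR0 u)].
Qed.

Lemma glue_morph : is_morph glue.
Proof.
  assert (Hadd : forall x y, glue (madd x y) = madd (glue x) (glue y)).
  { intros x y. set (N := Nat.max (coord_bound x) (coord_bound y)).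
    assert (Hx : forall n, (N <= n)%nat -> act (pvec n) x = mzero)
      by (intros; apply coord_bound_spec; lia).
    assert (Hy : forall n, (N <= n)%nat -> act (pvec n) y = mzero)
      by (intros; apply coord_bound_spec; lia).
    rewrite (glue_eq (madd x y) N), (glue_eq x N), (glue_eq y N), <- msum_add by
      (assumption || intros n Hn; rewrite act_addr, Hx, Hy by (apply pvec_inA || exact Hn);
       apply madd_0).
    apply msum_ext. intros m _. rewrite act_addr by apply pvec_inA.
    apply (HPsi m); [now exists x | now exists y]. }
  repeat split.
  - exact Hadd.
  - intros c x. rewrite (glue_eq (mscal c x) (coord_bound x)).
    + unfold glue. rewrite (msum_morph (mscal c)) by apply mscal_addr. apply msum_ext.
      intros m _. rewrite act_scalr by apply pvec_inA. apply (HPsi m). now exists x.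
    + intros n Hn. rewrite act_scalr, coord_bound_spec by (apply pvec_inA || exact Hn).
      apply mscal_mzero.
  - intros a x Ha. rewrite (glue_eq (act a x) (coord_bound x)).
    + unfold glue. rewrite (msum_morph (act a)) by (intros; apply act_addr, Ha). apply msum_ext.
      intros m _. rewrite act_pvec_act, (act_on_coord m a), (clift_scal _ _ _ _ _ (HPsi m))
        by (exact Ha || apply (HPsi m) || now exists x). reflexivity.
    + intros n Hn. rewrite act_pvec_act, coord_bound_spec by (exact Ha || exact Hn).
      apply mscal_mzero.
  - destruct (opnorm_exists phi Hphi) as [R0 HR0]. exists ((1 + delta) * R0).
    exact (glue_norm R0 HR0).
Qed.

End Gluing.

Lemma exists_margin R0 eps : 0 <= R0 -> 0 < eps ->
  exists delta, 0 < delta /\ (1 + delta) * R0 < R0 + eps.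
Proof.
  intros HR0 Heps. exists (eps / (R0 + 1)). split; [apply Rdiv_lt_0_compat; lra|].
  assert (E : eps / (R0 + 1) * (R0 + 1) = eps) by (field; lra). nra.
Qed.

Theorem theorem3p1 (A : SeqAlg) (P : NMod A) :
  homogeneous P -> finite_type P ->
  (forall n : nat, exists L : Type, iso_l10 P (coord_sub P n) L) ->
  extremely_projective (@cat_H A) P.
Proof.
  intros HhP HfP Hiso X Y _ [_ HhY] tau Htau phi Hphi eps Heps.
  destruct (opnorm_exists phi Hphi) as [R0 HR0].
  destruct (exists_margin R0 eps (opnorm_ge0 phi R0 Hphi HR0) Heps) as [delta [Hd Hmargin]].
  destruct (choice (fun m Psi_m => coordinate_lift tau phi delta m Psi_m)) as [Psi HPsi].
  { intro m. exact (coordinate_lift_exists tau phi delta m Htau Hphi Hd (Hiso m)). }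
  pose proof (glue_morph tau phi delta Psi HhP HfP HhY Htau Hphi Hd HPsi) as Hpsi.
  exists (glue Psi). split; [exact Hpsi | split].
  - exact (glue_lifts tau phi delta Psi HhP HfP Htau Hphi HPsi).
  - intros r Hr. rewrite (is_lub_u _ _ _ Hr HR0).
    destruct (opnorm_exists (glue Psi) Hpsi) as [r' Hr']. exists r'. split; [exact Hr'|].
    enough (r' <= (1 + delta) * R0) by lra.
    apply (opnorm_le _ r' _ Hr'); [pose proof (opnorm_ge0 phi R0 Hphi HR0); nra |].
    exact (glue_norm tau phi delta Psi HhP HfP HhY Htau Hphi Hd HPsi R0 HR0).
Qed.
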